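(* Let $f:\mathbb{R}\to\mathbb{R}$ be twice continuously differentiable, and let $u_L<u_U$ with $f''>0$ on $(u_L,u_U)$ or $f''<0$ on $(u_L,u_U)$. Let $a$ be the nonlinear average defined below. (Merging) Let $x_1<x_2\le x_3<x_4$, let $x_{23}$ satisfy $x_2\le x_{23}\le x_3$, and let $u_1,u_2,u_3,u_4\in[u_L,u_U]$. Then there is at most one $u_{23}\in[u_L,u_U]$ satisfying $$(x_{23}-x_1)\,a(u_1,u_{23})+(x_4-x_{23})\,a(u_{23},u_4)=(x_2-x_1)\,a(u_1,u_2)+(x_3-x_2)\,a(u_2,u_3)+(x_4-x_3)\,a(u_3,u_4).$$ (Insertion) Let $x_2<x_{23}<x_3$ and $u_2,u_3\in[u_L,u_U]$. Then there is at most one $u_{23}\in[u_L,u_U]$ satisfying $$(x_{23}-x_2)\,a(u_2,u_{23})+(x_3-x_{23})\,a(u_{23},u_3)=(x_3-x_2)\,a(u_2,u_3).$$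
   Context: For $g:\mathbb{R}\to\mathbb{R}$ write $[g(u)]_{a}^{b}=g(b)-g(a)$. For $u_1\neq u_2$ the nonlinear average is $a(u_1,u_2)=\frac{[f'(u)u-f(u)]_{u_1}^{u_2}}{[f'(u)]_{u_1}^{u_2}}=\frac{\int_{u_1}^{u_2}f''(u)u\,\mathrm{d}u}{\int_{u_1}^{u_2}f''(u)\,\mathrm{d}u}$, and $a(u,u)=u$. Here $(x_i,u_i)$ are particles (positions and solution values) in a particle method for $u_t+(f(u))_x=0$, and $(x_{23},u_{23})$ is the particle replacing particles 2 and 3 (merging) or inserted between them (insertion). *)

From Stdlib Require Import Reals Lra.
From Coquelicot Require Import Coquelicot.
Open Scope R_scope.

Definition C2 (f : R -> R) : Prop :=
  forall x : R, ex_derive f x /\ ex_derive (Derive f) x /\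
                continuous (Derive (Derive f)) x.

Definition nl_avg (f : R -> R) (u1 u2 : R) : R :=
  if Req_EM_T u1 u2 then u1
  else ((Derive f u2 * u2 - f u2) - (Derive f u1 * u1 - f u1))
       / (Derive f u2 - Derive f u1).

(* The nonlinear average is a ratio of increments, a(u, v) = [L]_u^v / [f']_u^v with
   L u = f'(u) u - f(u). Since L' = u f'', it is an f''-weighted mean of the points
   between u and v, so for convex f it lies strictly between u and v. Splitting the
   increments at y exhibits a(x, z) as the mediant of a(x, y) and a(y, z), hence
   a(x, y) < a(x, z) < a(y, z) for x < y < z; together with the previous fact this
   makes a(u, .) strictly increasing on [uL, uU] for every u there. Both sides of the
   merging and insertion identities are therefore strictly increasing in u23, so they
   have at most one solution. The concave case reduces to the convex one because
   replacing f by -f leaves a unchanged. *)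
From Stdlib Require Import Reals Lra.
From Coquelicot Require Import Coquelicot.
Open Scope R_scope.

Lemma lt_of_derive_pos (F dF : R -> R) (x y : R) :
  (forall t, is_derive F t (dF t)) -> (forall t, x < t < y -> dF t > 0) ->
  x < y -> F x < F y.
Proof.
  intros HF Hpos Hxy.
  destruct (MVT_cor2 F dF x y Hxy) as [c [Hc Hcxy]].
  { intros c _; apply is_derive_Reals, HF. }
  assert (dF c > 0) by (apply Hpos; lra).
  nra.
Qed.

Lemma Ropp_div_Ropp (a b : R) : - a / - b = a / b.
Proof. now rewrite Rdiv_opp_l, Rdiv_opp_r, Ropp_involutive. Qed.

Lemma mediant_between (A B p q : R) : 0 < p -> 0 < q -> A / p < B / q ->
  A / p < (A + B) / (p + q) < B / q.
Proof.
  intros Hp Hq Hab.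
  set (a := A / p) in *; set (b := B / q) in *.
  replace (A + B) with (a * p + b * q) by (unfold a, b; field; lra).
  clearbody a b.
  assert (0 < (b - a) * q) by (apply Rmult_lt_0_compat; lra).
  assert (0 < (b - a) * p) by (apply Rmult_lt_0_compat; lra).
  split; [apply Rlt_div_r | apply Rlt_div_l]; lra.
Qed.

Definition legendre (f : R -> R) (u : R) : R := Derive f u * u - f u.

Lemma nl_avg_diag (f : R -> R) (u : R) : nl_avg f u u = u.
Proof. unfold nl_avg; destruct (Req_EM_T u u); congruence. Qed.

Lemma nl_avg_neq (f : R -> R) (u v : R) : u <> v ->
  nl_avg f u v = (legendre f v - legendre f u) / (Derive f v - Derive f u).
Proof. intros Huv; unfold nl_avg; destruct (Req_EM_T u v); easy. Qed.

Lemma nl_avg_comm (f : R -> R) (u v : R) : nl_avg f u v = nl_avg f v u.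
Proof.
  destruct (Req_dec u v) as [<- | Huv]; [reflexivity |].
  rewrite !nl_avg_neq by auto.
  rewrite <- Ropp_div_Ropp; f_equal; ring.
Qed.

Lemma Derive2_opp (f : R -> R) (u : R) :
  Derive (Derive (fun x => - f x)) u = - Derive (Derive f) u.
Proof.
  rewrite (Derive_ext _ (fun x => - Derive f x)) by apply Derive_opp.
  apply Derive_opp.
Qed.

Lemma C2_opp (f : R -> R) : C2 f -> C2 (fun x => - f x).
Proof.
  intros Hf x; destruct (Hf x) as (Hd1 & Hd2 & Hc).
  split; [| split].
  - exact (ex_derive_opp f x Hd1).
  - apply (ex_derive_ext (fun y => - Derive f y)); [intros y; symmetry; apply Derive_opp |].
    exact (ex_derive_opp _ x Hd2).
  - apply (continuous_ext (fun y => - Derive (Derive f) y));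
      [intros y; symmetry; apply Derive2_opp |].
    exact (continuous_opp _ x Hc).
Qed.

Lemma nl_avg_opp (f : R -> R) (u v : R) : nl_avg (fun x => - f x) u v = nl_avg f u v.
Proof.
  unfold nl_avg; destruct (Req_EM_T u v); [reflexivity |].
  rewrite !Derive_opp, <- Ropp_div_Ropp; f_equal; ring.
Qed.

Section StrictlyConvex.

Variables (f : R -> R) (uL uU : R).
Hypothesis f_C2 : C2 f.
Hypothesis f''_pos : forall u, uL < u < uU -> Derive (Derive f) u > 0.

Lemma is_derive_legendre_shift (c t : R) :
  is_derive (fun u => legendre f u - c * Derive f u) t (Derive (Derive f) t * (t - c)).
Proof.
  destruct (f_C2 t) as (Hd1 & Hd2 & _).
  apply Derive_correct in Hd1, Hd2.
  replace (Derive (Derive f) t * (t - c))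
    with (Derive (Derive f) t * t + Derive f t * 1 - Derive f t - c * Derive (Derive f) t)
    by ring.
  apply (is_derive_minus (legendre f) (fun u => c * Derive f u)).
  - apply (is_derive_minus (fun u => Derive f u * u) f); [| exact Hd1].
    apply (is_derive_mult (Derive f) (fun u => u)); [exact Hd2 | apply (is_derive_id (K := R_AbsRing)) |].
    intros; apply Rmult_comm.
  - now apply is_derive_scal.
Qed.

Lemma Derive_lt (x y : R) : uL <= x -> x < y -> y <= uU -> Derive f x < Derive f y.
Proof.
  intros Hx Hxy Hy.
  apply (lt_of_derive_pos _ (Derive (Derive f))); [| intros t Ht; apply f''_pos; lra | exact Hxy].
  intros t; apply Derive_correct, f_C2.
Qed.

Lemma nl_avg_between (x y : R) : uL <= x -> x < y -> y <= uU ->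
  x < nl_avg f x y < y.
Proof.
  intros Hx Hxy Hy.
  assert (HD := Derive_lt x y Hx Hxy Hy).
  rewrite nl_avg_neq by lra.
  split.
  - assert (Hinc : legendre f x - x * Derive f x < legendre f y - x * Derive f y).
    { apply (lt_of_derive_pos _ _ x y (is_derive_legendre_shift x)); [| exact Hxy].
      intros t Ht; assert (Derive (Derive f) t > 0) by (apply f''_pos; lra); nra. }
    apply Rlt_div_r; lra.
  - assert (Hdec : - (legendre f x - y * Derive f x) < - (legendre f y - y * Derive f y)).
    { apply (lt_of_derive_pos (fun u => - (legendre f u - y * Derive f u))
                              (fun t => - (Derive (Derive f) t * (t - y)))); [| | exact Hxy].
      - intros t; exact (is_derive_opp _ t _ (is_derive_legendre_shift y t)).
      - intros t Ht; assert (Derive (Derive f) t > 0) by (apply f''_pos; lra); nra. }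
    apply Rlt_div_l; lra.
Qed.

Lemma nl_avg_mediant (x y z : R) : uL <= x -> x < y -> y < z -> z <= uU ->
  nl_avg f x y < nl_avg f x z < nl_avg f y z.
Proof.
  intros Hx Hxy Hyz Hz.
  assert (Hxy_yz : nl_avg f x y < nl_avg f y z).
  { pose proof (nl_avg_between x y); pose proof (nl_avg_between y z); lra. }
  pose proof (Derive_lt x y Hx Hxy ltac:(lra)).
  pose proof (Derive_lt y z ltac:(lra) Hyz Hz).
  rewrite !nl_avg_neq in * by lra.
  replace (legendre f z - legendre f x)
    with ((legendre f y - legendre f x) + (legendre f z - legendre f y)) by ring.
  replace (Derive f z - Derive f x)
    with ((Derive f y - Derive f x) + (Derive f z - Derive f y)) by ring.
  apply mediant_between; lra.
Qed.

Lemma nl_avg_increasing (u v w : R) : uL <= u <= uU -> uL <= v -> v < w -> w <= uU ->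
  nl_avg f u v < nl_avg f u w.
Proof.
  intros Hu Hv Hvw Hw.
  destruct (Rtotal_order u v) as [Huv | [<- | Hvu]].
  - apply nl_avg_mediant; lra.
  - rewrite nl_avg_diag; apply nl_avg_between; lra.
  - rewrite (nl_avg_comm f u v).
    destruct (Rtotal_order u w) as [Huw | [<- | Hwu]].
    + pose proof (nl_avg_between v u); pose proof (nl_avg_between u w); lra.
    + rewrite nl_avg_diag; apply nl_avg_between; lra.
    + rewrite (nl_avg_comm f u w); apply nl_avg_mediant; lra.
Qed.

Lemma nl_avg_combination_inj_convex (al be u1 u4 v w : R) : 0 < al -> 0 < be ->
  uL <= u1 <= uU -> uL <= u4 <= uU -> uL <= v <= uU -> uL <= w <= uU ->
  al * nl_avg f u1 v + be * nl_avg f v u4 = al * nl_avg f u1 w + be * nl_avg f w u4 ->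
  v = w.
Proof.
  intros Hal Hbe Hu1 Hu4 Hv Hw E.
  assert (Hinc : forall v w, uL <= v -> v < w -> w <= uU ->
    al * nl_avg f u1 v + be * nl_avg f v u4 < al * nl_avg f u1 w + be * nl_avg f w u4).
  { intros v' w' Hv' Hvw' Hw'.
    pose proof (nl_avg_increasing u1 v' w' Hu1 Hv' Hvw' Hw').
    pose proof (nl_avg_increasing u4 v' w' Hu4 Hv' Hvw' Hw').
    rewrite (nl_avg_comm f v' u4), (nl_avg_comm f w' u4); nra. }
  destruct (Rtotal_order v w) as [Hvw | [Hvw | Hwv]]; [| exact Hvw |].
  - specialize (Hinc v w ltac:(lra) Hvw ltac:(lra)); lra.
  - specialize (Hinc w v ltac:(lra) Hwv ltac:(lra)); lra.
Qed.

End StrictlyConvex.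

Lemma nl_avg_combination_inj (f : R -> R) (uL uU al be u1 u4 v w : R) : C2 f ->
  ((forall u, uL < u < uU -> Derive (Derive f) u > 0) \/
   (forall u, uL < u < uU -> Derive (Derive f) u < 0)) ->
  0 < al -> 0 < be ->
  uL <= u1 <= uU -> uL <= u4 <= uU -> uL <= v <= uU -> uL <= w <= uU ->
  al * nl_avg f u1 v + be * nl_avg f v u4 = al * nl_avg f u1 w + be * nl_avg f w u4 ->
  v = w.
Proof.
  intros Hf [Hconv | Hconc].
  - exact (nl_avg_combination_inj_convex f uL uU Hf Hconv al be u1 u4 v w).
  - rewrite <- !(nl_avg_opp f).
    apply (nl_avg_combination_inj_convex _ uL uU (C2_opp f Hf)).
    intros u Hu; rewrite Derive2_opp; specialize (Hconc u Hu); lra.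
Qed.

Theorem lemma2 (f : R -> R) (uL uU : R) :
  C2 f -> uL < uU ->
  ((forall u, uL < u < uU -> Derive (Derive f) u > 0) \/
   (forall u, uL < u < uU -> Derive (Derive f) u < 0)) ->
  (* merging *)
  (forall x1 x2 x3 x4 x23 u1 u2 u3 u4 : R,
     x1 < x2 -> x2 <= x3 -> x3 < x4 -> x2 <= x23 <= x3 ->
     uL <= u1 <= uU -> uL <= u2 <= uU -> uL <= u3 <= uU -> uL <= u4 <= uU ->
     forall v w : R, uL <= v <= uU -> uL <= w <= uU ->
     (x23 - x1) * nl_avg f u1 v + (x4 - x23) * nl_avg f v u4 =
       (x2 - x1) * nl_avg f u1 u2 + (x3 - x2) * nl_avg f u2 u3
       + (x4 - x3) * nl_avg f u3 u4 ->
     (x23 - x1) * nl_avg f u1 w + (x4 - x23) * nl_avg f w u4 =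
       (x2 - x1) * nl_avg f u1 u2 + (x3 - x2) * nl_avg f u2 u3
       + (x4 - x3) * nl_avg f u3 u4 ->
     v = w) /\
  (* insertion *)
  (forall x2 x23 x3 u2 u3 : R,
     x2 < x23 -> x23 < x3 ->
     uL <= u2 <= uU -> uL <= u3 <= uU ->
     forall v w : R, uL <= v <= uU -> uL <= w <= uU ->
     (x23 - x2) * nl_avg f u2 v + (x3 - x23) * nl_avg f v u3 =
       (x3 - x2) * nl_avg f u2 u3 ->
     (x23 - x2) * nl_avg f u2 w + (x3 - x23) * nl_avg f w u3 =
       (x3 - x2) * nl_avg f u2 u3 ->
     v = w).
Proof.
  intros Hf _ Hsign; split.
  - intros x1 x2 x3 x4 x23 u1 u2 u3 u4 ? ? ? ? Hu1 _ _ Hu4 v w Hv Hw Ev Ew.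
    apply (nl_avg_combination_inj f uL uU (x23 - x1) (x4 - x23) u1 u4); auto; lra.
  - intros x2 x23 x3 u2 u3 ? ? Hu2 Hu3 v w Hv Hw Ev Ew.
    apply (nl_avg_combination_inj f uL uU (x23 - x2) (x3 - x23) u2 u3); auto; lra.
Qed.
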